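(* Let $\sigma$ be a 2-structure and $X\subsetneq V(\sigma)$ with $\sigma[X]$ prime; write $\overline{X}=V(\sigma)\setminus X$. Suppose Statement (S3) holds (there is no $Y\subseteq\overline{X}$ with $|Y|=3$ and $\sigma[X\cup Y]$ prime). If $\sigma$ is prime, then: (1) Let $e\in E(\sigma)$. If $|\langle X\rangle^{(e,e)}_\sigma|\geq 2$, then $\sigma[\langle X\rangle_\sigma]$ is constant and $E(\sigma[\langle X\rangle_\sigma])=\{e[\langle X\rangle_\sigma]\}$. Similarly, for $\alpha\in X$, if $|X^{(e,e)}_\sigma(\alpha)|\geq 2$, then $\sigma[X_\sigma(\alpha)]$ is constant and $E(\sigma[X_\sigma(\alpha)])=\{e[X_\sigma(\alpha)]\}$. (2) Let $e,f\in E(\sigma)$ be distinct. If $|\langle X\rangle^{(e,f)}_\sigma|\geq 2$, then $\sigma[\langle X\rangle_\sigma]$ is linear and $E(\sigma[\langle X\rangle_\sigma])=\{e[\langle X\rangle_\sigma],f[\langle X\rangle_\sigma]\}$. Similarly, for $\alpha\in X$, if $|X^{(e,f)}_\sigma(\alpha)|\geq 2$, then $\sigma[X_\sigma(\alpha)]$ is linear and $E(\sigma[X_\sigma(\alpha)])=\{e[X_\sigma(\alpha)],f[X_\sigma(\alpha)]\}$.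
   Context: A 2-structure $\sigma$ consists of a vertex set $V(\sigma)$ and an equivalence relation $\equiv_\sigma$ on ordered pairs of distinct vertices; $E(\sigma)$ is its set of classes; $(v,w)_\sigma$ is the class of $(v,w)$ and $[v,w]_\sigma=((v,w)_\sigma,(w,v)_\sigma)$; $\sigma[W]$ is the induced 2-structure on $W$. For $e\in E(\sigma)$ and $W\subseteq V(\sigma)$, $e[W]=e\cap(W\times W)$. A module is a set $M$ such that for all $x,y\in M$ and $v\notin M$, $(x,v)\equiv_\sigma(y,v)$ and $(v,x)\equiv_\sigma(v,y)$; $\sigma$ is prime if $|V(\sigma)|\geq3$ and its only modules are $\emptyset$, $V(\sigma)$ and singletons. A 2-structure $\tau$ is constant if $|E(\tau)|=1$; $\tau$ is linear if there exist distinct $e,f\in E(\tau)$ such that the relation $\{(v,w): v\neq w,\ [v,w]_\tau=(e,f)\}$ is a (strict) linear order on $V(\tau)$. Given $\sigma[X]$ prime: $\langle X\rangle_\sigma=\{v\in\overline{X}: X\text{ is a module of }\sigma[X\cup\{v\}]\}$; for $\alpha\in X$, $X_\sigma(\alpha)=\{v\in\overline{X}:\{\alpha,v\}\text{ is a module of }\sigma[X\cup\{v\}]\}$. For $e,f\in E(\sigma)$: $\langle X\rangle^{(e,f)}_\sigma=\{v\in\langle X\rangle_\sigma:(v,\beta)\in e,(\beta,v)\in f\}$ for any $\beta\in X$; $X^{(e,f)}_\sigma(\alpha)=\{v\in X_\sigma(\alpha):(v,\alpha)\in e,(\alpha,v)\in f\}$. *)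

(* Finite 2-structures: the vertex set V(sigma) is the whole finType V. *)
From mathcomp Require Import all_boot.
Set Implicit Arguments. Unset Strict Implicit. Unset Printing Implicit Defensive.

Section TwoStructures.
Variable V : finType.

Definition offd : {set V * V} := [set p | p.1 != p.2].

(* R is an equivalence relation on ordered pairs of distinct vertices:
   (V, R) is a 2-structure sigma with V(sigma) = V and ==_sigma = R. *)
Definition is_2structure (R : rel (V * V)) : Prop :=
  [/\ {in offd, reflexive R},
      {in offd &, symmetric R} &
      {in offd & &, forall p q r, R p q -> R q r -> R p r}].

Variable R : rel (V * V).

Definition cls (p : V * V) : {set V * V} := [set q in offd | R p q].

Definition Eset : {set {set V * V}} := [set cls p | p in offd].

Definition restr (e : {set V * V}) (W : {set V}) : {set V * V} := e :&: setX W W.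

Definition E_in (W : {set V}) : {set {set V * V}} :=
  [set restr (cls p) W | p in offd :&: setX W W].

Definition module_in (W M : {set V}) : bool :=
  (M \subset W) &&
  [forall x in M, forall y in M, forall v in W :\: M,
      R (x, v) (y, v) && R (v, x) (v, y)].

Definition prime_in (W : {set V}) : Prop :=
  2 < #|W| /\
  forall M : {set V}, module_in W M -> [\/ M = set0, M = W | #|M| = 1].

Definition constant_in (W : {set V}) : Prop := #|E_in W| = 1.

Definition strict_linear_on (W : {set V}) (L : rel V) : Prop :=
  [/\ {in W, forall v, ~~ L v v},
      {in W & &, forall u v w, L u v -> L v w -> L u w} &
      {in W &, forall v w, v != w -> L v w || L w v}].

Definition linear_in (W : {set V}) : Prop :=
  exists e f, [/\ e \in E_in W, f \in E_in W, e != f &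
    strict_linear_on W
      (fun v w => (v != w) && (restr (cls (v, w)) W == e)
                           && (restr (cls (w, v)) W == f))].

Definition extX (X : {set V}) : {set V} :=
  [set v in ~: X | module_in (v |: X) X].

Definition Xalpha (X : {set V}) (a : V) : {set V} :=
  [set v in ~: X | module_in (v |: X) [set a; v]].

(* <X>^{(e,f)}_sigma  (beta ranges over X; independent of beta since X is a module) *)
Definition extX_ef (X : {set V}) (e f : {set V * V}) : {set V} :=
  [set v in extX X | [forall b in X, ((v, b) \in e) && ((b, v) \in f)]].

Definition Xalpha_ef (X : {set V}) (a : V) (e f : {set V * V}) : {set V} :=
  [set v in Xalpha X a | ((v, a) \in e) && ((a, v) \in f)].

Definition S3 (X : {set V}) : Prop :=
  ~ exists Y : {set V}, [/\ Y \subset ~: X, #|Y| = 3 & prime_in (X :|: Y)].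

End TwoStructures.

(* Let P be <X> or X(alpha).  A vertex a of P has a type tp a, the pair [a,x] for any
   x in X (resp. [a,alpha]), and the vertices outside X and P are witnesses; a witness z
   is absorbed by a if a does not separate z from X (resp. z does not separate a from
   alpha).  For distinct a, b in P and a witness z, sigma[X ∪ {a,b,z}] is not prime by
   (S3), and a nontrivial module of it meets the prime X in nothing, everything or a
   single vertex.  This case analysis shows that a witness absorbed by exactly one of a, b
   makes [a,b] a type, and that a witness absorbed by neither forces tp a = tp b.
   Primality of sigma supplies witnesses: every a is separated from some witness, and two
   vertices of equal type are split by some witness, for otherwise their class would be a
   nontrivial module of sigma.  Hence [a,b] = tp a whenever tp a ≠ tp b, every type and
   every [a,b] lies in {(e,f), (f,e)}, and there is no 3-cycle of pairs (e,f), since the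
   vertex alone on its side of a splitting witness would see the other two alike.  So
   sigma[P] is constant if e = f and linear otherwise. *)

From mathcomp Require Import all_boot.
Set Implicit Arguments. Unset Strict Implicit. Unset Printing Implicit Defensive.

Lemma card_gt1_in2 (T : finType) (M : {set T}) p q :
  1 < #|M| -> {in M, forall y, y = p \/ y = q} -> [/\ p \in M, q \in M & p != q].
Proof.
move=> /card_gt1P[x [y [xM yM xy]]] hM.
case: (hM x xM) (hM y yM) => ? [] ?; subst x y.
- by rewrite eqxx in xy.
- by [].
- by rewrite eq_sym.
- by rewrite eqxx in xy.
Qed.

Section TwoStructure.
Variables (V : finType) (R : rel (V * V)).
Hypothesis hR : is_2structure R.

Definition col (a b : V) := cls R (a, b).

Local Notation link a b := (col a b, col b a).

Lemma cls_eqP p q : p \in offd V -> q \in offd V -> cls R p = cls R q <-> R p q.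
Proof.
case: hR => refl sym trans hp hq; split => [epq | Rpq].
  have : q \in cls R q by rewrite inE hq refl.
  by rewrite -epq inE => /andP[].
apply/setP => r; rewrite [in LHS]inE [in RHS]inE; case: (boolP (r \in offd V)) => //= hr.
by apply/idP/idP => [Rpr | Rqr]; [apply: (trans q p r); rewrite // sym | apply: (trans p q r)].
Qed.

Lemma mem_col a b : a != b -> (a, b) \in col a b.
Proof. by case: hR => refl _ _ ab; rewrite inE !inE ab refl // inE. Qed.

Lemma col_Eset a b : a != b -> col a b \in Eset R.
Proof. by move=> ab; apply/imsetP; exists (a, b); rewrite ?inE. Qed.

Lemma col_of_mem e a b : e \in Eset R -> a != b -> (a, b) \in e -> col a b = e.
Proof.
case/imsetP => p po -> ab; rewrite inE => /andP[_ Rp]; symmetry.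
by apply/cls_eqP; rewrite // inE.
Qed.

Lemma moduleP (W M : {set V}) : module_in R W M <-> M \subset W /\
  (forall x y v, x \in M -> y \in M -> v \in W -> v \notin M -> link v x = link v y).
Proof.
have off x v : x \in M -> v \notin M -> (x, v) \in offd V /\ (v, x) \in offd V.
  move=> xM vM; have xv : x != v by apply: contraNneq vM => <-.
  by rewrite !inE /= xv eq_sym xv.
split => [/andP[sMW /forallP hM] | [sMW hM]].
  split => // x y v xM yM vW vM.
  move: (hM x); rewrite xM => /forallP /(_ y); rewrite yM => /forallP /(_ v).
  rewrite inE vM vW => /andP[Rxy Rvx].
  have [xv vx] := off x v xM vM; have [yv vy] := off y v yM vM.
  by rewrite /col (cls_eqP vx vy).2 // (cls_eqP xv yv).2.
apply/andP; split=> //; apply/forallP => x; apply/implyP => xM.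
apply/forallP => y; apply/implyP => yM; apply/forallP => v.
rewrite inE; apply/implyP => /andP[vM vW]; have [eq1 eq2] := hM x y v xM yM vW vM.
have [xv vx] := off x v xM vM; have [yv vy] := off y v yM vM.
by apply/andP; split; [apply/(cls_eqP xv yv) | apply/(cls_eqP vx vy)].
Qed.

Lemma module_setI (W W' M : {set V}) : W' \subset W -> module_in R W M -> module_in R W' (M :&: W').
Proof.
move=> sW /moduleP[_ hM]; apply/moduleP; split=> [|x y v]; first exact: subsetIr.
rewrite !inE => /andP[xM _] /andP[yM _] vW'; rewrite vW' andbT => vM.
exact: hM (subsetP sW v vW') vM.
Qed.

Lemma prime_module_full (W M : {set V}) : prime_in R W -> module_in R W M -> 1 < #|M| -> M = W.
Proof. by case=> _ hW /hW[-> | // | ->]; rewrite ?cards0. Qed.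

Lemma not_prime_module (W : {set V}) : 2 < #|W| -> ~ prime_in R W ->
  exists2 M, module_in R W M & ~~ (W \subset M) && (1 < #|M|).
Proof.
move=> W3 notW.
case: (boolP [exists M, [&& module_in R W M, ~~ (W \subset M) & 1 < #|M|]]).
  by case/existsP => M /and3P[hM nWM M2]; exists M; rewrite ?nWM.
move/existsPn => nex; case: notW; split=> // M hM.
move: (nex M); rewrite hM /= negb_and negbK -leqNgt => /orP[WM | M1].
  by constructor 2; apply/eqP; rewrite eqEsubset WM andbT; case/andP: hM.
move: M1; rewrite leq_eqVlt ltnS leqn0 cards_eq0 => /orP[/eqP | /eqP ->]; by constructor.
Qed.

Lemma prime_full_of_link (M : {set V}) : prime_in R [set: V] -> 1 < #|M| ->
  (forall y, y \notin M -> exists g, forall m, m \in M -> link y m = g) -> M = [set: V].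
Proof.
move=> hV M2 hM; apply: prime_module_full M2 => //; apply/moduleP; split=> // x y v xM yM _ vM.
by have [g hg] := hM v vM; rewrite !hg.
Qed.

Lemma E_inP (W : {set V}) s : s \in E_in R W <->
  exists a b, [/\ a \in W, b \in W, a != b & s = restr (col a b) W].
Proof.
split=> [/imsetP[[a b]] | [a [b [aW bW ab ->]]]].
  by rewrite !inE /= => /and3P[ab aW bW] ->; exists a, b.
by apply/imsetP; exists (a, b); rewrite // !inE /= ab aW bW.
Qed.

Lemma constant_of_col (W : {set V}) e v w : v \in W -> w \in W -> v != w ->
  {in W &, forall a b, a != b -> col a b = e} ->
  constant_in R W /\ E_in R W = [set restr e W].
Proof.
move=> vW wW vw hW.
suff EW : E_in R W = [set restr e W] by rewrite /constant_in EW cards1.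
apply/setP => s; rewrite inE; apply/idP/eqP => [/E_inP[a [b [aW bW ab ->]]] | ->].
  by rewrite hW.
by apply/E_inP; exists v, w; rewrite hW.
Qed.

Lemma restr_neq (W : {set V}) e f v w : e != f -> v \in W -> w \in W -> v != w ->
  link v w = (e, f) -> restr e W != restr f W.
Proof.
move=> ef vW wW vw [cvw cwv]; apply: contra_neq ef => eWf.
have : (v, w) \in restr f W by rewrite -eWf !inE -cvw mem_col //= vW wW.
rewrite !inE -cwv => /andP[vw_wv _].
by rewrite -cvw; apply: col_of_mem vw_wv => //; apply: col_Eset; rewrite eq_sym.
Qed.

Lemma linear_of_link (W : {set V}) e f v w : e != f -> v \in W -> w \in W -> v != w ->
  {in W &, forall a b, a != b -> link a b = (e, f) \/ link a b = (f, e)} ->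
  {in W & &, forall a b c, link a b = (e, f) -> link b c = (e, f) -> link a c = (e, f)} ->
  linear_in R W /\ E_in R W = [set restr e W; restr f W].
Proof.
move=> ef vW wW vw hW htr.
wlog vw_ef : v w vW wW vw / link v w = (e, f).
  move=> hwlog; case: (hW v w vW wW vw); first exact: hwlog.
  by case=> wv vw'; apply: (hwlog w v); rewrite 1?eq_sym ?wv ?vw'.
have neq := restr_neq ef vW wW vw vw_ef.
have nfe : (restr f W == restr e W) = false by rewrite eq_sym (negbTE neq).
have EW : E_in R W = [set restr e W; restr f W].
  apply/setP => s; rewrite !inE; apply/idP/orP => [/E_inP[a [b [aW bW ab ->]]] | [] /eqP ->].
  - by case: (hW a b aW bW ab) => -[-> _]; [left | right].
  - by apply/E_inP; exists v, w; case: vw_ef => <-.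
  - by apply/E_inP; exists w, v; rewrite eq_sym; case: vw_ef => _ <-.
have LE : {in W &, forall a b, (a != b) && (restr (cls R (a, b)) W == restr e W)
    && (restr (cls R (b, a)) W == restr f W) = (a != b) && (link a b == (e, f))}.
  move=> a b aW bW; case: (eqVneq a b) => //= ab.
  rewrite -[cls R (a, b)]/(col a b) -[cls R (b, a)]/(col b a).
  case: (hW a b aW bW ab) => -[-> ->]; rewrite ?eqxx // nfe /= xpair_eqE.
  by rewrite eq_sym (negbTE ef).
split=> //; exists (restr e W), (restr f W); split; rewrite ?EW ?inE ?eqxx ?orbT //.
split=> [a aW | a b c aW bW cW | a b aW bW ab]; rewrite ?LE ?eqxx //.
- move=> /andP[ab /eqP hab] /andP[bc /eqP hbc]; rewrite (htr a b c) ?eqxx ?andbT //.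
  by apply: contraNneq ef => ac; move: hab hbc; rewrite ac => -[-> ->] [->].
- case: (hW a b aW bW ab) => -[h1 h2]; apply/orP; [left | right].
  + by rewrite ab h1 h2 eqxx.
  + by rewrite eq_sym ab h1 h2 eqxx.
Qed.

End TwoStructure.

(* [P] is the set under study, [Bs] the witnesses, [In z a] says that [z] is absorbed by
   [a], and [tp a] is the type of [a].  A witness absorbed by exactly one of [u] and [w]
   fixes [link u w] as the type of whichever of them lies on the side [In z _ = ~~ d]. *)
Section Witnesses.
Variables (V : finType) (T : eqType) (col : V -> V -> T).
Variables (P Bs : {set V}) (In : V -> V -> bool) (tp : V -> T * T) (d : bool).
Local Notation link a b := (col a b, col b a).

Hypothesis tp_out : forall a b z, a \in P -> b \in P -> a != b -> z \in Bs ->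
  ~~ In z a -> ~~ In z b -> tp a = tp b /\ link z a = link z b.
Hypothesis link_lead : forall u w z, u \in P -> w \in P -> z \in Bs ->
  In z u = ~~ d -> In z w = d -> link u w = tp u.
Hypothesis out_exists : forall a, a \in P -> exists2 z, z \in Bs & ~~ In z a.

Lemma link_split u w z : u \in P -> w \in P -> z \in Bs -> In z u != In z w ->
  link u w = if In z u == ~~ d then tp u else ((tp w).2, (tp w).1).
Proof.
move=> uP wP zB zuw.
have [[zu zw] | [zw zu]] : (In z u = ~~ d /\ In z w = d) \/ (In z w = ~~ d /\ In z u = d).
  by move: zuw; case: d (In z u) (In z w) => [] [] []; auto.
- by rewrite zu eqxx (link_lead uP wP zB).
- by rewrite zu -(link_lead wP uP zB zw zu); case: d {zu zw}.
Qed.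

Definition tp_class a := [set u in P | (tp u == tp a) && [forall z in Bs, In z u == In z a]].

Hypothesis link_in : forall u w z, u \in P -> w \in P -> z \in Bs ->
  In z u -> In z w -> tp u = tp w -> link z u = link z w.

Lemma tp_classP a u : u \in tp_class a <->
  [/\ u \in P, tp u = tp a & forall z, z \in Bs -> In z u = In z a].
Proof.
rewrite inE; split=> [/and3P[uP /eqP tu /forall_inP hu] | [-> -> hu]].
  by split=> // z /hu/eqP.
by rewrite eqxx; apply/forall_inP => z /hu ->.
Qed.

Lemma tp_class_link a y : a \in P -> y \in P :|: Bs -> y \notin tp_class a ->
  exists g, forall m, m \in tp_class a -> link y m = g.
Proof.
move=> aP /setUP[yP | yB] ya.
  case: (boolP [exists z in Bs, In z y != In z a]) => [/exists_inP[z zB yza] | ].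
    exists (if In z y == ~~ d then tp y else ((tp a).2, (tp a).1)) => m /tp_classP[mP tm hm].
    by rewrite (link_split yP mP zB) ?hm ?tm.
  move/exists_inPn => same; case/negP: ya; apply/tp_classP; split=> // [|z zB]; last first.
    by apply/eqP; rewrite -[_ == _]negbK same.
  case: (eqVneq y a) => [-> // | ya]; have [z zB zy] := out_exists yP.
  have := same z zB; rewrite negbK => /eqP zya.
  by case: (tp_out yP aP ya zB zy); rewrite -?zya.
exists (link y a) => m /tp_classP[mP tm hm]; case: (eqVneq m a) => [-> // | ma].
case: (boolP (In y a)) => [yIa | yNa]; first by apply: link_in; rewrite ?hm.
by case: (tp_out mP aP ma yB); rewrite ?hm.
Qed.

Hypothesis tp_class_small : forall a, a \in P -> #|tp_class a| <= 1.

Lemma split_exists a b : a \in P -> b \in P -> a != b -> tp a = tp b ->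
  exists2 z, z \in Bs & In z a != In z b.
Proof.
move=> aP bP ab tab; apply/exists_inP; apply: contraTT (tp_class_small aP).
move/exists_inPn => same; rewrite -ltnNge; apply/card_gt1P; exists a, b.
split=> //; apply/tp_classP; split=> // z zB.
by apply/eqP; rewrite eq_sym -[_ == _]negbK same.
Qed.

Lemma link_cross a b : a \in P -> b \in P -> tp a != tp b -> link a b = tp a.
Proof.
have witness u w : u \in P -> w \in P -> tp u != tp w ->
    exists2 z, z \in Bs & (In z u = false) /\ (In z w = true).
  move=> uP wP tuw; have [z zB zu] := out_exists uP; exists z => //.
  split; first exact: negbTE.
  have uw : u != w by apply: contraNneq tuw => ->.
  by apply: contraNT tuw => zw; apply/eqP; case: (tp_out uP wP uw zB zu zw).
move=> aP bP tab; have [z zB [za zb]] := witness a b aP bP tab.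
have [z' zB' [zb' za']] : exists2 z, z \in Bs & (In z b = false) /\ (In z a = true).
  by apply: witness; rewrite 1?eq_sym.
have := link_split aP bP zB; have := link_split bP aP zB'.
rewrite za zb za' zb' => /(_ isT) h' /(_ isT) h.
by case: d h h' => /= [-> | _ [-> ->]]; last case: (tp a).
Qed.

Lemma link_same a b : a \in P -> b \in P -> a != b -> tp a = tp b ->
  link a b = tp a \/ link b a = tp a.
Proof.
move=> aP bP ab tab; have [z zB zab] := split_exists aP bP ab tab.
have := link_split aP bP zB zab; case: ifP => _ h; [by left | right].
by case: h => -> ->; rewrite tab; case: (tp b).
Qed.

Lemma tp_dichotomy v u e f : v \in P -> u \in P -> tp v = (e, f) ->
  tp u = (e, f) \/ tp u = (f, e).
Proof.
move=> vP uP tv; case: (eqVneq (tp u) (tp v)) => [-> | tuv]; [by left | right].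
rewrite -(link_cross uP vP tuv).
by have [-> ->] : link v u = (e, f) by rewrite -tv link_cross // eq_sym.
Qed.

Lemma link_dichotomy v e f a b : v \in P -> tp v = (e, f) -> a \in P -> b \in P -> a != b ->
  link a b = (e, f) \/ link a b = (f, e).
Proof.
move=> vP tv aP bP ab; case: (eqVneq (tp a) (tp b)) => tab; last first.
  by rewrite link_cross //; exact: (tp_dichotomy vP aP tv).
case: (link_same aP bP ab tab) => [-> | h]; first exact: (tp_dichotomy vP aP tv).
by case: (tp_dichotomy vP aP tv) => ta; rewrite ta in h; case: h => -> ->; [right | left].
Qed.

Lemma col_const v e a b : v \in P -> tp v = (e, e) -> a \in P -> b \in P -> a != b ->
  col a b = e.
Proof. by move=> vP tv aP bP ab; case: (link_dichotomy vP tv aP bP ab) => -[]. Qed.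

Lemma link_cycle_tp v e f a b c : v \in P -> tp v = (e, f) -> a \in P -> b \in P -> c \in P ->
  link a b = (e, f) -> link b c = (e, f) -> link c a = (e, f) -> tp a = tp b /\ tp b = tp c.
Proof.
move=> vP tv aP bP cP hab hbc hca.
have back x y : x \in P -> y \in P -> link x y = (e, f) -> tp y = (e, f) -> tp x = (e, f).
  move=> xP yP xy ty; case: (eqVneq (tp x) (tp y)) => [-> // | txy].
  by rewrite -xy link_cross.
have all_ef : tp a = (e, f) \/ tp b = (e, f) \/ tp c = (e, f) -> tp a = tp b /\ tp b = tp c.
  case=> [ta | [tb | tc]].
  - by have tc := back c a cP aP hca ta; have tb := back b c bP cP hbc tc; rewrite ta tb tc.
  - by have ta := back a b aP bP hab tb; have tc := back c a cP aP hca ta; rewrite ta tb tc.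
  - by have tb := back b c bP cP hbc tc; have ta := back a b aP bP hab tb; rewrite ta tb tc.
case: (tp_dichotomy vP aP tv) => ta; first by apply: all_ef; left.
case: (tp_dichotomy vP bP tv) => tb; first by apply: all_ef; right; left.
case: (tp_dichotomy vP cP tv) => tc; first by apply: all_ef; right; right.
by rewrite ta tb tc.
Qed.

Lemma no_link_cycle v e f a b c : e != f -> v \in P -> tp v = (e, f) ->
  a \in P -> b \in P -> c \in P ->
  link a b = (e, f) -> link b c = (e, f) -> link c a = (e, f) -> False.
Proof.
move=> ef vP tv aP bP cP hab hbc hca; move/eqP: ef => ef.
have [tab tbc] := link_cycle_tp vP tv aP bP cP hab hbc hca.
have ab : a != b by apply/eqP => ab; move: hab; rewrite ab; congruence.
have [z zB zab] := split_exists aP bP ab tab.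
have lone x y w : x \in P -> y \in P -> w \in P -> In z x != In z y -> In z x != In z w ->
    tp y = tp w -> link x y = link x w.
  by move=> xP yP wP xy xw tyw; rewrite (link_split xP yP zB) // (link_split xP wP zB) // tyw.
case: (eqVneq (In z c) (In z b)) => [cb | cb].
  have := lone a b c aP bP cP zab; rewrite cb => /(_ zab tbc).
  by rewrite hab; case: hca => -> ->; congruence.
have [bc ba] : In z b != In z c /\ In z b != In z a by rewrite !(eq_sym (In z b)).
have := lone b c a bP cP aP bc ba (esym (etrans tab tbc)).
by rewrite hbc; case: hab => -> ->; congruence.
Qed.

Lemma link_trans v e f a b c : e != f -> v \in P -> tp v = (e, f) ->
  a \in P -> b \in P -> c \in P ->
  link a b = (e, f) -> link b c = (e, f) -> link a c = (e, f).
Proof.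
move=> ef vP tv aP bP cP hab hbc.
have ac : a != c by apply: contraNneq ef => ac; move: hab hbc; rewrite ac => -[-> ->] [->].
case: (link_dichotomy vP tv aP cP ac) => // hac; case: (no_link_cycle ef vP tv aP bP cP hab hbc).
by case: hac => -> ->.
Qed.

End Witnesses.

Section WitnessedConclusions.
Variables (V : finType) (R : rel (V * V)).
Hypothesis hR : is_2structure R.
Variables (P Bs : {set V}) (In : V -> V -> bool) (tp : V -> {set V * V} * {set V * V}).
Variable d : bool.
Local Notation col := (col R).
Local Notation link a b := (col a b, col b a).

Hypothesis tp_out : forall a b z, a \in P -> b \in P -> a != b -> z \in Bs ->
  ~~ In z a -> ~~ In z b -> tp a = tp b /\ link z a = link z b.
Hypothesis link_lead : forall u w z, u \in P -> w \in P -> z \in Bs ->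
  In z u = ~~ d -> In z w = d -> link u w = tp u.
Hypothesis out_exists : forall a, a \in P -> exists2 z, z \in Bs & ~~ In z a.
Hypothesis tp_class_small : forall a, a \in P -> #|tp_class P Bs In tp a| <= 1.

Lemma witnessed_constant v w e : v \in P -> w \in P -> v != w -> tp v = (e, e) ->
  constant_in R P /\ E_in R P = [set restr e P].
Proof.
move=> vP wP vw tv; apply: (constant_of_col vP wP vw) => a b aP bP.
exact: (col_const tp_out link_lead out_exists tp_class_small vP tv).
Qed.

Lemma witnessed_linear v w e f : e != f -> v \in P -> w \in P -> v != w -> tp v = (e, f) ->
  linear_in R P /\ E_in R P = [set restr e P; restr f P].
Proof.
move=> ef vP wP vw tv; apply: (linear_of_link hR ef vP wP vw) => [a b aP bP | a b c aP bP cP].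
  exact: (link_dichotomy tp_out link_lead out_exists tp_class_small vP tv).
exact: (link_trans tp_out link_lead out_exists tp_class_small ef vP tv).
Qed.

End WitnessedConclusions.

Section PrimeSubstructure.
Variables (V : finType) (R : rel (V * V)).
Hypothesis hR : is_2structure R.
Variable X : {set V}.
Hypothesis hX : prime_in R X.
Local Notation col := (col R).
Local Notation link a b := (col a b, col b a).

Lemma prime_card_gt2 : 2 < #|X|.
Proof. by case: hX. Qed.

Lemma X_nonempty : exists x0, x0 \in X.
Proof. by apply/card_gt0P; apply: ltn_trans prime_card_gt2. Qed.

Lemma extXP v : v \in extX R X <-> v \notin X /\ {in X &, forall x y, link v x = link v y}.
Proof.
rewrite inE in_setC; split=> [/andP[vX /(moduleP hR)[_ hv]] | [vX hv]].
  by split=> // x y xX yX; apply: hv; rewrite ?setU11.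
rewrite vX; apply/(moduleP hR); split=> [|x y w xX yX]; first exact: subsetUr.
by case/setU1P => [-> _ | wX /negP //]; apply: hv.
Qed.

Lemma XalphaP a v : a \in X -> v \in Xalpha R X a <->
  v \notin X /\ {in X :\ a, forall x, link x a = link x v}.
Proof.
move=> aX; rewrite inE in_setC; split=> [/andP[vX /(moduleP hR)[_ hv]] | [vX hv]].
  split=> // x /setD1P[xa xX]; have xv : x != v by apply: contraNneq vX => <-.
  by apply: hv; rewrite !inE ?eqxx ?xX ?orbT // negb_or xa.
have hw w : w \in v |: X -> w \notin [set a; v] -> link w a = link w v.
  rewrite !inE negb_or => /orP[/eqP -> | wX]; first by rewrite eqxx andbF.
  by case/andP => wa _; apply: hv; apply/setD1P.
rewrite vX; apply/(moduleP hR); split=> [|x y w].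
  by apply/subsetP => x /set2P[] ->; rewrite !inE ?eqxx ?aX ?orbT.
by move=> /set2P[] -> /set2P[] -> // wW wM; rewrite hw.
Qed.

Lemma module_meet (W M : {set V}) : X \subset W -> module_in R W M ->
  [\/ {subset X <= M}, {in X, forall x, x \notin M} |
      exists2 c, c \in X & {in X, forall x, (x \in M) = (x == c)}].
Proof.
move=> sXW hM; case: hX => _ /(_ _ (module_setI hR sXW hM)) [MX | MX | /eqP/cards1P[c MX]].
- by constructor 2 => x xX; apply/negP => xM; move: (in_set0 x); rewrite -MX inE xM xX.
- by constructor 1 => x; rewrite -MX => /setIP[].
constructor 3; exists c; first by have /setIP[] : c \in M :&: X by rewrite MX set11.
by move=> x xX; rewrite -in_set1 -MX inE xX andbT.
Qed.

Lemma setD1_not_module c : c \in X -> ~ {in X :\ c &, forall x y, link c x = link c y}.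
Proof.
move=> cX hc; have hM : module_in R X (X :\ c).
  apply/(moduleP hR); split=> [|x y v xM yM vX]; first exact: subsetDl.
  by rewrite !inE vX andbT negbK => /eqP ->; apply: hc.
have Xc : 1 < #|X :\ c| by move: prime_card_gt2; rewrite (cardsD1 c) cX.
by move/setP/(_ c): (prime_module_full hX hM Xc); rewrite !inE eqxx cX.
Qed.

Lemma pair_not_module a c : a \in X -> c \in X -> a != c ->
  ~ {in X :\: [set a; c], forall x, link x a = link x c}.
Proof.
move=> aX cX ac hac; have hM : module_in R X [set a; c].
  apply/(moduleP hR); split=> [|x y v]; first by apply/subsetP => x /set2P[] ->.
  move=> /set2P[] -> /set2P[] -> vX vac //;
    by have := hac v; rewrite inE vac vX => /(_ isT) ->.
have ac2 : 1 < #|[set a; c]| by rewrite cards2 ac.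
by move: prime_card_gt2; rewrite -(prime_module_full hX hM ac2) cards2 ac.
Qed.

Lemma extX_notin_Xalpha a v : a \in X -> v \in extX R X -> v \notin Xalpha R X a.
Proof.
move=> aX /extXP[vX hv]; apply/negP => /(XalphaP _ aX)[_ ha].
apply: (setD1_not_module aX) => x y xa ya.
case: (ha x xa) => -> ->; case: (ha y ya) => -> ->.
by apply: hv; apply: (subsetP (subD1set X a)).
Qed.

Definition rest (P : {set V}) := ~: (X :|: P).

Lemma restP (P : {set V}) z : z \in rest P <-> z \notin X /\ z \notin P.
Proof. by rewrite !inE negb_or; split=> [/andP[] | [-> ->]]. Qed.

Lemma rest_cases (P : {set V}) y : [\/ y \in X, y \in P | y \in rest P].
Proof.
case: (boolP (y \in X)) => yX; first by constructor 1.
case: (boolP (y \in P)) => yP; first by constructor 2.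
by constructor 3; apply/restP.
Qed.

Lemma triple_cases a b z y : y \in X :|: [set a; b; z] -> [\/ y \in X, y = a, y = b | y = z].
Proof.
rewrite !inE => /orP[yX | /orP[/orP[] | ] /eqP ->]; by [constructor 1 | constructor 2 |
  constructor 3 | constructor 4].
Qed.

Lemma triple_mem a b z : [/\ a \in X :|: [set a; b; z], b \in X :|: [set a; b; z],
  z \in X :|: [set a; b; z] & {subset X <= X :|: [set a; b; z]}].
Proof. by split=> [||| x xX]; rewrite !inE ?eqxx ?xX ?orbT. Qed.

Hypothesis hS3 : S3 R X.

Lemma S3_module (P : {set V}) a b z : {in P, forall v, v \notin X} ->
  a \in P -> b \in P -> a != b -> z \in rest P ->
  exists2 M, module_in R (X :|: [set a; b; z]) M &
    ~~ (X :|: [set a; b; z] \subset M) && (1 < #|M|).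
Proof.
move=> PX aP bP ab /restP[zX zP]; apply: not_prime_module.
  exact: leq_trans prime_card_gt2 (subset_leq_card (subsetUl _ _)).
have [az bz] : a != z /\ b != z by split; apply: contraNneq zP => <-.
move=> hW; apply: hS3; exists [set a; b; z]; split=> //.
  by apply/subsetP => y; rewrite !inE => /orP[/orP[] | ] /eqP ->; [apply: PX | apply: PX |].
by rewrite -setUA cardsU1 cards2 !inE negb_or ab az bz.
Qed.

Hypothesis hV : prime_in R [set: V].

Section ExtX.
Variable x0 : V.
Hypothesis x0X : x0 \in X.

(* A vertex of [extX R X] sees all of [X] alike, so [x0] stands for [X]. *)
Definition ext_tp a := link a x0.
Definition ext_absorbed z a := link a z == link a x0.

Lemma extX_notin v : v \in extX R X -> v \notin X.
Proof. by case/extXP. Qed.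

Section ExtTriple.
Variables (a b z : V) (M : {set V}).
Hypotheses (aP : a \in extX R X) (bP : b \in extX R X) (zB : z \in rest (extX R X)).
Hypothesis hM : module_in R (X :|: [set a; b; z]) M.
Hypotheses (MW : ~~ (X :|: [set a; b; z] \subset M)) (M2 : 1 < #|M|).

Local Notation ext_cases := [\/ ext_absorbed z a /\ ext_absorbed z b,
  ext_absorbed z b /\ link b a = ext_tp b, ext_absorbed z a /\ link a b = ext_tp a |
  ext_tp a = ext_tp b /\ link z a = link z b].

Let lM := proj2 ((moduleP hR _ _).1 hM).
Let M_cases y : y \in M -> [\/ y \in X, y = a, y = b | y = z].
Proof. by move=> yM; apply: triple_cases; case/(moduleP hR): hM => /subsetP->. Qed.
Let zX : z \notin X. Proof. by case/restP: zB. Qed.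
Let zP : z \notin extX R X. Proof. by case/restP: zB. Qed.

Lemma ext_triple_Xsub : {subset X <= M} -> ext_cases.
Proof.
move=> XM; have [Wa Wb Wz _] := triple_mem a b z.
have zM : z \in M.
  apply: contraNT zP => zM; apply/extXP; split=> // x y xX yX.
  exact: lM (XM x xX) (XM y yX) Wz zM.
have absorbed c : c \in X :|: [set a; b; z] -> c \notin M -> ext_absorbed z c.
  by move=> cW cM; apply/eqP; apply: lM zM (XM x0 x0X) cW cM.
have lead c d : c \in X :|: [set a; b; z] -> c \notin M -> d \in M -> link c d = ext_tp c.
  by move=> cW cM dM; apply: lM dM (XM x0 x0X) cW cM.
case: (boolP (a \in M)) => aM; case: (boolP (b \in M)) => bM.
- by case/negP: MW; apply/subsetP => y /triple_cases[/XM | -> | -> | ->].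
- by constructor 2; split; [apply: absorbed | apply: lead].
- by constructor 3; split; [apply: absorbed | apply: lead].
- by constructor 1; split; apply: absorbed.
Qed.

Lemma ext_triple_Xdisj : {in X, forall x, x \notin M} -> ext_cases.
Proof.
move=> XnM; have [_ _ Wz WX] := triple_mem a b z.
have zc c : c \in extX R X -> z \in M -> c \notin M.
  move=> /extXP[_ hc] zM; apply/negP => cM; case/negP: zP; apply/extXP; split=> // x y xX yX.
  case: (lM zM cM (WX x xX) (XnM x xX)) => -> ->.
  by case: (lM zM cM (WX y yX) (XnM y yX)) => -> ->; apply: hc.
have zM : z \notin M.
  apply/negP => zM; suff [] : [/\ z \in M, z \in M & z != z] by rewrite eqxx.
  apply: (card_gt1_in2 M2) => y yM; case/M_cases: (yM) => [yX | ya | yb | ->]; last by left.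
  - by case/negP: (XnM y yX).
  - by case/negP: (zc a aP zM); rewrite -ya.
  - by case/negP: (zc b bP zM); rewrite -yb.
have [aM bM _] : [/\ a \in M, b \in M & a != b].
  apply: (card_gt1_in2 M2) => y yM.
  case/M_cases: (yM) => [yX | -> | -> | yz]; [| by left | by right |].
  - by case/negP: (XnM y yX).
  - by case/negP: zM; rewrite -yz.
constructor 4; split; last exact: lM aM bM Wz zM.
by rewrite /ext_tp; case: (lM aM bM (WX x0 x0X) (XnM x0 x0X)) => -> ->.
Qed.

Lemma ext_triple_Xsingle x1 : x1 \in X -> {in X, forall x, (x \in M) = (x == x1)} -> ext_cases.
Proof.
move=> x1X hx1; have [_ _ _ WX] := triple_mem a b z.
have x1M : x1 \in M by rewrite hx1 ?eqxx.
have out x : x \in X -> x != x1 -> x \notin M by move=> xX xx1; rewrite hx1 // (negbTE xx1).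
have cM c : c \in extX R X -> c \notin M.
  move=> /extXP[_ hc]; apply/negP => cM; apply: (setD1_not_module x1X) => x y.
  move=> /setD1P[xx1 xX] /setD1P[yx1 yX].
  case: (lM x1M cM (WX x xX) (out x xX xx1)) => -> ->.
  by case: (lM x1M cM (WX y yX) (out y yX yx1)) => -> ->; apply: hc.
have [_ zM _] : [/\ x1 \in M, z \in M & x1 != z].
  apply: (card_gt1_in2 M2) => y yM; case/M_cases: (yM) => [yX | ya | yb | ->]; last by right.
  - by left; apply/eqP; rewrite -hx1.
  - by case/negP: (cM a aP); rewrite -ya.
  - by case/negP: (cM b bP); rewrite -yb.
have absorbed c : c \in extX R X -> c \in X :|: [set a; b; z] -> ext_absorbed z c.
  move=> cP cW; have [_ hc] := (extXP c).1 cP; apply/eqP.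
  by rewrite (lM zM x1M cW (cM c cP)); apply: hc.
by constructor 1; split; apply: absorbed; rewrite // !inE eqxx !orbT.
Qed.

End ExtTriple.

Lemma ext_triple a b z : a \in extX R X -> b \in extX R X -> a != b -> z \in rest (extX R X) ->
  [\/ ext_absorbed z a /\ ext_absorbed z b, ext_absorbed z b /\ link b a = ext_tp b,
      ext_absorbed z a /\ link a b = ext_tp a | ext_tp a = ext_tp b /\ link z a = link z b].
Proof.
move=> aP bP ab zB; have [M hM /andP[MW M2]] := S3_module extX_notin aP bP ab zB.
case: (module_meet (subsetUl _ _) hM) => [XM | XnM | [x1 x1X hx1]].
- exact: (ext_triple_Xsub zB hM MW XM).
- exact: (ext_triple_Xdisj aP bP zB hM M2 XnM).
- exact: (ext_triple_Xsingle aP bP hM M2 x1X hx1).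
Qed.

Lemma ext_tp_out a b z : a \in extX R X -> b \in extX R X -> a != b -> z \in rest (extX R X) ->
  ~~ ext_absorbed z a -> ~~ ext_absorbed z b -> ext_tp a = ext_tp b /\ link z a = link z b.
Proof.
move=> aP bP ab zB /negPf za /negPf zb.
by case: (ext_triple aP bP ab zB) => [[] | [] | [] | //]; rewrite ?za ?zb.
Qed.

Lemma ext_link_lead u w z : u \in extX R X -> w \in extX R X -> z \in rest (extX R X) ->
  ext_absorbed z u -> ext_absorbed z w = false -> link u w = ext_tp u.
Proof.
move=> uP wP zB zu zw; have wu : w != u by apply: contraFneq zw => ->.
case: (ext_triple wP uP wu zB) => [[] | [] // | [] | [twu zwu]]; rewrite ?zw //.
move/eqP: zu zw => zu /negbT/eqP[]; case: zwu => -> ->.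
by rewrite zu; symmetry.
Qed.

Lemma ext_link_in u w z : u \in extX R X -> w \in extX R X -> z \in rest (extX R X) ->
  ext_absorbed z u -> ext_absorbed z w -> ext_tp u = ext_tp w -> link z u = link z w.
Proof.
move=> _ _ _ /eqP zu /eqP zw tuw.
by case: zu => -> ->; case: zw => -> ->; case: tuw => -> ->.
Qed.

Lemma ext_out_exists a : a \in extX R X -> exists2 z, z \in rest (extX R X) & ~~ ext_absorbed z a.
Proof.
move=> aP; apply/exists_inP; apply: contraT => /exists_inPn all_absorbed.
pose As := [set u in extX R X | [forall z in rest (extX R X), ext_absorbed z u]].
have aAs : a \in As by rewrite inE aP; apply/forall_inP => z /all_absorbed; rewrite negbK.
have XAs : X \subset ~: As.
  by apply/subsetP => x xX; rewrite in_setC; apply: contraL xX => /setIdP[/extXP[]].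
have As2 : 1 < #|~: As| := leq_trans (ltnW prime_card_gt2) (subset_leq_card XAs).
suff : ~: As = [set: V] by move/setP/(_ a); rewrite in_setC in_setT aAs.
apply: (prime_full_of_link hR hV As2) => y; rewrite inE negbK => /setIdP[yP /forall_inP yB].
exists (ext_tp y) => m; rewrite in_setC => mAs.
case: (rest_cases (extX R X) m) => [mX | mP | mB].
- by have [_ hy] := (extXP y).1 yP; apply: hy.
- move: mAs; rewrite in_set mP /= => /forall_inPn[z zB zm].
  by apply: (ext_link_lead yP mP zB (yB z zB)); apply: negbTE.
- exact/eqP/yB.
Qed.

Lemma ext_tp_class_small a : a \in extX R X ->
  #|tp_class (extX R X) (rest (extX R X)) ext_absorbed ext_tp a| <= 1.
Proof.
move=> aP; rewrite leqNgt; apply/negP => C2.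
have class_link :=
  tp_class_link (d := false) ext_tp_out ext_link_lead ext_out_exists ext_link_in aP.
set C := tp_class _ _ _ _ a in C2 class_link *.
suff C_full : C = [set: V].
  have /tp_classP[x0P _ _] : x0 \in C by rewrite C_full.
  by move: (extX_notin x0P); rewrite x0X.
apply: (prime_full_of_link hR hV C2) => y yC.
case: (rest_cases (extX R X) y) => [yX | yP | yB].
- exists (((ext_tp a).2, (ext_tp a).1)) => m /tp_classP[mP tm _].
  by have [_ hm] := (extXP m).1 mP; case: (hm y x0 yX x0X) => -> ->; rewrite -tm.
- by apply: class_link => //; apply/setUP; left.
- by apply: class_link => //; apply/setUP; right.
Qed.

Lemma ext_ef_tp e f v : e \in Eset R -> f \in Eset R -> v \in extX_ef R X e f ->
  v \in extX R X /\ ext_tp v = (e, f).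
Proof.
move=> eE fE /setIdP[vP /forall_inP /(_ x0 x0X) /andP[ve fv]]; split=> //.
have vx0 : v != x0 by apply: contraTneq vP => ->; apply: contraL x0X; apply: extX_notin.
by rewrite /ext_tp (col_of_mem hR eE vx0 ve) (col_of_mem hR fE _ fv) // eq_sym.
Qed.

End ExtX.

Section Xalpha.
Variable al : V.
Hypothesis alX : al \in X.

Definition alpha_tp a := link a al.
Definition alpha_absorbed z a := link z a == link z al.

Lemma Xalpha_notin v : v \in Xalpha R X al -> v \notin X.
Proof. by case/(XalphaP _ alX). Qed.

Section AlphaTriple.
Variables (a b z : V) (M : {set V}).
Hypotheses (aP : a \in Xalpha R X al) (bP : b \in Xalpha R X al).
Hypothesis zB : z \in rest (Xalpha R X al).
Hypothesis hM : module_in R (X :|: [set a; b; z]) M.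
Hypotheses (MW : ~~ (X :|: [set a; b; z] \subset M)) (M2 : 1 < #|M|).

Local Notation alpha_cases := [\/ alpha_absorbed z a /\ alpha_absorbed z b,
  alpha_absorbed z a /\ alpha_absorbed b a, alpha_absorbed z b /\ alpha_absorbed a b |
  alpha_tp a = alpha_tp b /\ link z a = link z b].

Let lM := proj2 ((moduleP hR _ _).1 hM).
Let M_cases y : y \in M -> [\/ y \in X, y = a, y = b | y = z].
Proof. by move=> yM; apply: triple_cases; case/(moduleP hR): hM => /subsetP->. Qed.
Let zX : z \notin X. Proof. by case/restP: zB. Qed.
Let zP : z \notin Xalpha R X al. Proof. by case/restP: zB. Qed.

Lemma alpha_triple_Xsub : {subset X <= M} -> alpha_cases.
Proof.
move=> XM; have [Wa Wb Wz _] := triple_mem a b z.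
have inM c : c \in Xalpha R X al -> c \in X :|: [set a; b; z] -> c \in M.
  move=> cP cW; apply: contraT => cM.
  have cE : c \in extX R X.
    apply/extXP; split=> [|x y xX yX]; first exact: Xalpha_notin.
    exact: lM (XM x xX) (XM y yX) cW cM.
  by move: (extX_notin_Xalpha alX cE); rewrite cP.
have [aM bM] := (inM a aP Wa, inM b bP Wb).
have zM : z \notin M.
  by apply: contra MW => zM; apply/subsetP => y /triple_cases[/XM | -> | -> | ->].
by constructor 1; split; apply/eqP; apply: lM (XM al alX) Wz zM.
Qed.

Lemma alpha_triple_Xdisj : {in X, forall x, x \notin M} -> alpha_cases.
Proof.
move=> XnM; have [_ _ Wz WX] := triple_mem a b z.
have zc c : c \in Xalpha R X al -> z \in M -> c \notin M.
  move=> /(XalphaP _ alX)[_ hc] zM; apply/negP => cM; case/negP: zP.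
  apply/(XalphaP _ alX); split=> // x xal; rewrite hc //.
  have /setD1P[_ xX] := xal.
  by case: (lM zM cM (WX x xX) (XnM x xX)) => -> ->.
have zM : z \notin M.
  apply/negP => zM; suff [] : [/\ z \in M, z \in M & z != z] by rewrite eqxx.
  apply: (card_gt1_in2 M2) => y yM; case/M_cases: (yM) => [yX | ya | yb | ->]; last by left.
  - by case/negP: (XnM y yX).
  - by case/negP: (zc a aP zM); rewrite -ya.
  - by case/negP: (zc b bP zM); rewrite -yb.
have [aM bM _] : [/\ a \in M, b \in M & a != b].
  apply: (card_gt1_in2 M2) => y yM.
  case/M_cases: (yM) => [yX | -> | -> | yz]; [| by left | by right |].
  - by case/negP: (XnM y yX).
  - by case/negP: zM; rewrite -yz.
constructor 4; split; last exact: lM aM bM Wz zM.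
by rewrite /alpha_tp; case: (lM aM bM (WX al alX) (XnM al alX)) => -> ->.
Qed.

Lemma alpha_triple_alpha : {in X, forall x, (x \in M) = (x == al)} -> alpha_cases.
Proof.
move=> hal; have [_ _ Wz WX] := triple_mem a b z.
have alM : al \in M by rewrite hal ?eqxx.
have zM : z \notin M.
  apply/negP => zM; case/negP: zP; apply/(XalphaP _ alX); split=> // x /setD1P[xal xX].
  by apply: lM alM zM (WX x xX) _; rewrite hal // (negbTE xal).
have absorbed c d : c \in M -> d \in X :|: [set a; b; z] -> d \notin M -> alpha_absorbed d c.
  by move=> cM dW dM; apply/eqP; apply: lM.
case: (boolP (a \in M)) => aM; case: (boolP (b \in M)) => bM.
- by constructor 1; split; apply: absorbed.
- by constructor 2; split; apply: absorbed; rewrite // !inE eqxx !orbT.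
- by constructor 3; split; apply: absorbed; rewrite // !inE eqxx !orbT.
- suff [] : [/\ al \in M, al \in M & al != al] by rewrite eqxx.
  apply: (card_gt1_in2 M2) => y yM; case/M_cases: (yM) => [yX | ya | yb | yz]; left.
  + by apply/eqP; rewrite -hal.
  + by case/negP: aM; rewrite -ya.
  + by case/negP: bM; rewrite -yb.
  + by case/negP: zM; rewrite -yz.
Qed.

Lemma alpha_triple_Xsingle x1 : x1 \in X -> x1 != al ->
  {in X, forall x, (x \in M) = (x == x1)} -> alpha_cases.
Proof.
move=> x1X x1al hx1; have [_ _ _ WX] := triple_mem a b z.
have x1M : x1 \in M by rewrite hx1 ?eqxx.
have out x : x \in X -> x != x1 -> x \notin M by move=> xX xx1; rewrite hx1 // (negbTE xx1).
have alM : al \notin M by apply: out; rewrite // eq_sym.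
have cM c : c \in Xalpha R X al -> c \notin M.
  move=> /(XalphaP _ alX)[_ hc]; apply/negP => cM.
  apply: (pair_not_module alX x1X _) => [|x /setDP[xX]]; first by rewrite eq_sym.
  rewrite !inE negb_or => /andP[xal xx1]; rewrite hc ?inE ?xal //.
  by rewrite (lM x1M cM (WX x xX) (out x xX xx1)).
have [_ zM _] : [/\ x1 \in M, z \in M & x1 != z].
  apply: (card_gt1_in2 M2) => y yM; case/M_cases: (yM) => [yX | ya | yb | ->]; last by right.
  - by left; apply/eqP; rewrite -hx1.
  - by case/negP: (cM a aP); rewrite -ya.
  - by case/negP: (cM b bP); rewrite -yb.
have absorbed c : c \in Xalpha R X al -> c \in X :|: [set a; b; z] -> alpha_absorbed z c.
  move=> cP cW; have [_ hc] := (XalphaP _ alX).1 cP; apply/eqP.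
  have [e1 e2] := lM zM x1M cW (cM c cP).
  have [e3 e4] := lM zM x1M (WX al alX) alM.
  have [e5 e6] : link x1 al = link x1 c by apply: hc; apply/setD1P.
  by rewrite e1 e2 e3 e4 e5 e6.
by constructor 1; split; apply: absorbed; rewrite // !inE eqxx !orbT.
Qed.

End AlphaTriple.

Lemma alpha_triple a b z : a \in Xalpha R X al -> b \in Xalpha R X al -> a != b ->
  z \in rest (Xalpha R X al) ->
  [\/ alpha_absorbed z a /\ alpha_absorbed z b, alpha_absorbed z a /\ alpha_absorbed b a,
      alpha_absorbed z b /\ alpha_absorbed a b | alpha_tp a = alpha_tp b /\ link z a = link z b].
Proof.
move=> aP bP ab zB; have [M hM /andP[MW M2]] := S3_module Xalpha_notin aP bP ab zB.
case: (module_meet (subsetUl _ _) hM) => [XM | XnM | [x1 x1X hx1]].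
- exact: (alpha_triple_Xsub aP bP hM MW XM).
- exact: (alpha_triple_Xdisj aP bP zB hM M2 XnM).
case: (eqVneq x1 al) => [x1al | x1al]; last exact: (alpha_triple_Xsingle aP bP hM M2 x1X x1al hx1).
by subst x1; exact: (alpha_triple_alpha zB hM M2 hx1).
Qed.

Lemma alpha_tp_out a b z : a \in Xalpha R X al -> b \in Xalpha R X al -> a != b ->
  z \in rest (Xalpha R X al) -> ~~ alpha_absorbed z a -> ~~ alpha_absorbed z b ->
  alpha_tp a = alpha_tp b /\ link z a = link z b.
Proof.
move=> aP bP ab zB /negPf za /negPf zb.
by case: (alpha_triple aP bP ab zB) => [[] | [] | [] | //]; rewrite ?za ?zb.
Qed.

Lemma alpha_link_lead u w z : u \in Xalpha R X al -> w \in Xalpha R X al ->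
  z \in rest (Xalpha R X al) -> alpha_absorbed z u = false -> alpha_absorbed z w ->
  link u w = alpha_tp u.
Proof.
move=> uP wP zB zu zw; have uw : u != w by apply: contraFneq zu => ->.
case: (alpha_triple uP wP uw zB) => [[] | [] | [_ /eqP //] | [_ zuw]]; rewrite ?zu //.
by move: zu zw; rewrite /alpha_absorbed zuw => ->.
Qed.

Lemma alpha_link_in u w z : u \in Xalpha R X al -> w \in Xalpha R X al ->
  z \in rest (Xalpha R X al) -> alpha_absorbed z u -> alpha_absorbed z w ->
  alpha_tp u = alpha_tp w -> link z u = link z w.
Proof. by move=> _ _ _ /eqP -> /eqP ->. Qed.

Lemma alpha_out_exists a : a \in Xalpha R X al ->
  exists2 z, z \in rest (Xalpha R X al) & ~~ alpha_absorbed z a.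
Proof.
move=> aP; apply/exists_inP; apply: contraT => /exists_inPn all_absorbed.
pose As := [set u in Xalpha R X al | [forall z in rest (Xalpha R X al), alpha_absorbed z u]].
have aAs : a \in As by rewrite inE aP; apply/forall_inP => z /all_absorbed; rewrite negbK.
have alAs : al \notin As by apply: contraL alX => /setIdP[/(XalphaP _ alX)[]].
have As2 : 1 < #|al |: As| by rewrite cardsU1 alAs ltnS card_gt0; apply/set0Pn; exists a.
have [x xX xal] : exists2 x, x \in X & x != al.
  have /card_gt1P[x [y [xX yX xy]]] := ltnW prime_card_gt2.
  by case: (eqVneq x al) => [xal | ]; [exists y; rewrite // -xal eq_sym | exists x].
suff /setP/(_ x) : al |: As = [set: V].
  by rewrite in_setT in_setU1 (negbTE xal) in_set => /andP[/(XalphaP _ alX)[]]; rewrite xX.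
apply: (prime_full_of_link hR hV As2) => y; rewrite in_setU1 negb_or => /andP[yal yAs].
exists (link y al) => m /setU1P[-> // | /setIdP[mP /forall_inP mB]].
case: (rest_cases (Xalpha R X al) y) => [yX | yP | yB].
- by have [_ hm] := (XalphaP _ alX).1 mP; rewrite hm //; apply/setD1P.
- move: yAs; rewrite in_set yP /= => /forall_inPn[z zB zy].
  by apply: (alpha_link_lead yP mP zB _ (mB z zB)); apply: negbTE.
- exact/eqP/mB.
Qed.

Lemma alpha_tp_class_small a : a \in Xalpha R X al ->
  #|tp_class (Xalpha R X al) (rest (Xalpha R X al)) alpha_absorbed alpha_tp a| <= 1.
Proof.
move=> aP; rewrite leqNgt; apply/negP => C2.
have class_link :=
  tp_class_link (d := true) alpha_tp_out alpha_link_lead alpha_out_exists alpha_link_in aP.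
set C := tp_class _ _ _ _ a in C2 class_link *.
suff C_full : C = [set: V].
  have /tp_classP[alP _ _] : al \in C by rewrite C_full.
  by move: (Xalpha_notin alP); rewrite alX.
apply: (prime_full_of_link hR hV C2) => y yC.
case: (rest_cases (Xalpha R X al) y) => [yX | yP | yB].
- case: (eqVneq y al) => [-> | yal].
    by exists (((alpha_tp a).2, (alpha_tp a).1)) => m /tp_classP[_ <- _].
  exists (link y al) => m /tp_classP[mP _ _].
  by have [_ hm] := (XalphaP _ alX).1 mP; rewrite hm //; apply/setD1P.
- by apply: class_link => //; apply/setUP; left.
- by apply: class_link => //; apply/setUP; right.
Qed.

Lemma alpha_ef_tp e f v : e \in Eset R -> f \in Eset R -> v \in Xalpha_ef R X al e f ->
  v \in Xalpha R X al /\ alpha_tp v = (e, f).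
Proof.
move=> eE fE /setIdP[vP /andP[ve fv]]; split=> //.
have val : v != al by apply: contraTneq vP => ->; apply: contraL alX; apply: Xalpha_notin.
by rewrite /alpha_tp (col_of_mem hR eE val ve) (col_of_mem hR fE _ fv) // eq_sym.
Qed.

End Xalpha.

Lemma extX_ef_constant e : e \in Eset R -> 1 < #|extX_ef R X e e| ->
  constant_in R (extX R X) /\ E_in R (extX R X) = [set restr e (extX R X)].
Proof.
move=> eE /card_gt1P[v [w [vS wS vw]]]; have [x0 x0X] := X_nonempty.
have [[vP tv] [wP _]] := (ext_ef_tp x0X eE eE vS, ext_ef_tp x0X eE eE wS).
exact: (witnessed_constant (d := false) (ext_tp_out x0X) (ext_link_lead x0X)
  (ext_out_exists x0X) (ext_tp_class_small x0X) vP wP vw tv).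
Qed.

Lemma extX_ef_linear e f : e \in Eset R -> f \in Eset R -> e != f -> 1 < #|extX_ef R X e f| ->
  linear_in R (extX R X) /\ E_in R (extX R X) = [set restr e (extX R X); restr f (extX R X)].
Proof.
move=> eE fE ef /card_gt1P[v [w [vS wS vw]]]; have [x0 x0X] := X_nonempty.
have [[vP tv] [wP _]] := (ext_ef_tp x0X eE fE vS, ext_ef_tp x0X eE fE wS).
exact: (witnessed_linear hR (d := false) (ext_tp_out x0X) (ext_link_lead x0X)
  (ext_out_exists x0X) (ext_tp_class_small x0X) ef vP wP vw tv).
Qed.

Lemma Xalpha_ef_constant al e : al \in X -> e \in Eset R -> 1 < #|Xalpha_ef R X al e e| ->
  constant_in R (Xalpha R X al) /\ E_in R (Xalpha R X al) = [set restr e (Xalpha R X al)].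
Proof.
move=> alX eE /card_gt1P[v [w [vS wS vw]]].
have [[vP tv] [wP _]] := (alpha_ef_tp alX eE eE vS, alpha_ef_tp alX eE eE wS).
exact: (witnessed_constant (d := true) (alpha_tp_out alX) (alpha_link_lead alX)
  (alpha_out_exists alX) (alpha_tp_class_small alX) vP wP vw tv).
Qed.

Lemma Xalpha_ef_linear al e f : al \in X -> e \in Eset R -> f \in Eset R -> e != f ->
  1 < #|Xalpha_ef R X al e f| ->
  linear_in R (Xalpha R X al) /\
  E_in R (Xalpha R X al) = [set restr e (Xalpha R X al); restr f (Xalpha R X al)].
Proof.
move=> alX eE fE ef /card_gt1P[v [w [vS wS vw]]].
have [[vP tv] [wP _]] := (alpha_ef_tp alX eE fE vS, alpha_ef_tp alX eE fE wS).
exact: (witnessed_linear hR (d := true) (alpha_tp_out alX) (alpha_link_lead alX)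
  (alpha_out_exists alX) (alpha_tp_class_small alX) ef vP wP vw tv).
Qed.

End PrimeSubstructure.

Theorem lemma3p10 (V : finType) (R : rel (V * V)) (X : {set V}) :
  is_2structure R ->
  X \proper [set: V] ->
  prime_in R X ->
  S3 R X ->
  prime_in R [set: V] ->
  (forall e, e \in Eset R ->
     (1 < #|extX_ef R X e e| ->
        constant_in R (extX R X) /\
        E_in R (extX R X) = [set restr e (extX R X)]) /\
     (forall a, a \in X -> 1 < #|Xalpha_ef R X a e e| ->
        constant_in R (Xalpha R X a) /\
        E_in R (Xalpha R X a) = [set restr e (Xalpha R X a)])) /\
  (forall e f, e \in Eset R -> f \in Eset R -> e != f ->
     (1 < #|extX_ef R X e f| ->
        linear_in R (extX R X) /\
        E_in R (extX R X) = [set restr e (extX R X); restr f (extX R X)]) /\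
     (forall a, a \in X -> 1 < #|Xalpha_ef R X a e f| ->
        linear_in R (Xalpha R X a) /\
        E_in R (Xalpha R X a) = [set restr e (Xalpha R X a); restr f (Xalpha R X a)])).
Proof.
move=> hR _ hX hS3 hV; split=> [e eE | e f eE fE ef]; split.
- exact: extX_ef_constant.
- by move=> a aX; apply: Xalpha_ef_constant.
- exact: extX_ef_linear.
- by move=> a aX; apply: Xalpha_ef_linear.
Qed.
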